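(* Let $\alpha>-1$, $d\in\widetilde{D}$, $p=(L_n^{(\alpha)})_{n\in\mathbb{N}_0}$, $q=(L_n^{(\alpha+1)})_{n\in\mathbb{N}_0}$, and let $T=E_{p,d}$ be regarded as an operator in $H(q)$ with domain $\mathcal{P}_c$. For $g=\sum_kg_kq_k\in H(q)$: (i) $g\in D(T^* )$ iff $\sum_{k=0}^\infty\left|g_k\bar d_k+\sum_{t=0}^{k-1}(\bar d_t-\bar d_{t+1})g_t\right|^2<\infty$; (ii) for $g\in D(T^* )$, $T^*g=\sum_{k=0}^\infty\left[g_k\bar d_k+\sum_{t=0}^{k-1}(\bar d_t-\bar d_{t+1})g_t\right]q_k$; (iii) for fixed $j\in\mathbb{N}_0$, $q_j\in D(T^* )$ iff $\bar d_j-\bar d_{j+1}=0$; (iv) $E_{L^{(\alpha)},d}$ is unbounded as an operator in $H(q)$, for every $d\in\widetilde{D}$.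
   Context: $\mathcal{P}_c$ is the space of polynomials in one real variable with complex coefficients. For $\beta>-1$, $L_n^{(\beta)}(x)=\sum_{k=0}^n\frac{(-1)^k}{k!}\binom{n+\beta}{n-k}x^k$ is the generalized Laguerre polynomial. For a sequence $Q=(Q_n)$ of polynomials with $\deg Q_n=n$, $H(Q)$ is the completion of $\mathcal{P}_c$ with respect to the inner product making $(Q_n)$ orthonormal (so here the unnormalized $L_n^{(\alpha+1)}$ are orthonormal); $g\in H(Q)$ is written $g=\sum_kg_kQ_k$, $(g_k)\in\ell_2$. $\widetilde{D}$ is the set of non-constant sequences of non-zero complex numbers. For a polynomial sequence $p$ and $d\in\widetilde{D}$, $E_{p,d}$ is the linear map on $\mathcal{P}_c$ with $E_{p,d}(p_n)=d_np_n$. $T^*$ is the Hilbert space adjoint. *)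

From HB Require Import structures.
From mathcomp Require Import all_boot all_order all_algebra.
From mathcomp Require Import complex reals.
From Stdlib Require Import ClassicalEpsilon.
Set Implicit Arguments. Unset Strict Implicit. Unset Printing Implicit Defensive.
Import Order.TTheory GRing.Theory Num.Theory.
Local Open Scope ring_scope.
Local Open Scope complex_scope.

Section Laguerre.
Variable R : realType.
Local Notation C := R[i].

Definition gbinom (x : C) (m : nat) : C :=
  (\prod_(i < m) (x - i%:R)) / (m`!)%:R.

Definition laguerre (beta : R) (n : nat) : {poly C} :=
  \sum_(k < n.+1)
    (((-1) ^+ k / (k`!)%:R) * gbinom (n%:R + beta%:C) (n - k)) *: 'X^k.

Definition is_coords (Q : nat -> {poly C}) (f : {poly C}) (c : nat -> C) :=
  (forall k, (size f <= k)%N -> c k = 0) /\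
  f = \sum_(k < size f) c k *: Q k.

Definition coords (Q : nat -> {poly C}) (f : {poly C}) : nat -> C :=
  epsilon (inhabits (fun _ => 0)) (fun c => is_coords Q f c).

Definition qseq (alpha : R) : nat -> {poly C} := laguerre (alpha + 1).
Definition pseq (alpha : R) : nat -> {poly C} := laguerre alpha.

Definition normsq (z : C) : R := (@complex.Re R z) ^+ 2 + (@complex.Im R z) ^+ 2.

Definition ell2 (g : nat -> C) : Prop :=
  exists M : R, forall n, \sum_(k < n) normsq (g k) <= M.

Definition Dtilde (d : nat -> C) : Prop :=
  (forall n, d n != 0) /\ exists m n, d m != d n.

Definition Epd (P : nat -> {poly C}) (d : nat -> C) (f : {poly C}) : {poly C} :=
  \sum_(n < size f) (coords P f n * d n) *: P n.

(* H(q) is identified with l_2 through g = sum_k g_k q_k  <->  (g_k).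
   Inner product <f, g>_{H(q)} of a polynomial f with g = sum_k g_k q_k *)
Definition ipH (Q : nat -> {poly C}) (f : {poly C}) (g : nat -> C) : C :=
  \sum_(k < size f) coords Q f k * (g k)^*.

Definition normH (Q : nat -> {poly C}) (f : {poly C}) : R :=
  Num.sqrt (\sum_(k < size f) normsq (coords Q f k)).

Definition in_dom_adj (Q : nat -> {poly C}) (T : {poly C} -> {poly C})
    (g : nat -> C) : Prop :=
  ell2 g /\ exists h, ell2 h /\ forall f, ipH Q (T f) g = ipH Q f h.

Definition is_adj_value (Q : nat -> {poly C}) (T : {poly C} -> {poly C})
    (g h : nat -> C) : Prop :=
  ell2 h /\ forall f, ipH Q (T f) g = ipH Q f h.

Definition adjcoef (d g : nat -> C) (k : nat) : C :=
  g k * (d k)^* + \sum_(t < k) ((d t)^* - (d t.+1)^*) * g t.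

End Laguerre.

From HB Require Import structures.
From mathcomp Require Import all_boot all_order all_algebra.
From mathcomp Require Import complex reals.
From mathcomp Require Import ring.
From Stdlib Require Import ClassicalEpsilon FunctionalExtensionality Classical.
Set Implicit Arguments. Unset Strict Implicit. Unset Printing Implicit Defensive.
Import Order.TTheory GRing.Theory Num.Theory.
Local Open Scope ring_scope.

(* Since L_n^(alpha+1) = sum_(k <= n) L_k^(alpha), we have p_0 = q_0 and
   p_(n+1) = q_(n+1) - q_n, so summation by parts gives
   T q_m = sum_(i < m) (d_i - d_(i+1)) q_i + d_m q_m.  Taking inner products with
   g in the orthonormal basis q yields <T f, g> = <f, h> for every polynomial f,
   with h_k = g_k \bar d_k + sum_(t < k) (\bar d_t - \bar d_(t+1)) g_t; testing on f = q_k
   shows h is the only candidate, whence (i) and (ii).  For g = q_j the sequence h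
   is eventually constant, equal to \bar d_j - \bar d_(j+1), and is square-summable iff
   that constant vanishes.  Finally, if d_j <> d_(j+1), then f = q_(j+1) + ... +
   q_(j+N) has norm sqrt N while the j-th coordinate of T f is N (d_j - d_(j+1)),
   so no bound ||T f|| <= M ||f|| can hold. *)

Lemma sum_ord_widen (V : nmodType) N M (F : nat -> V) : (N <= M)%N ->
  (forall k, (N <= k)%N -> F k = 0) -> \sum_(k < N) F k = \sum_(k < M) F k.
Proof.
move=> NM F0; rewrite (big_ord_widen _ F NM) big_mkcond /=.
by apply: eq_bigr => k _; case: ltnP => // /F0.
Qed.

Lemma linear_sumZ (K : pzRingType) (U V : lmodType K) (phi : U -> V) :
  (forall a u v, phi (a *: u + v) = a *: phi u + phi v) ->
  forall N (c : nat -> K) (u : nat -> U),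
    phi (\sum_(k < N) c k *: u k) = \sum_(k < N) c k *: phi (u k).
Proof.
move=> phiZD; have phi0 : phi 0 = 0.
  have := phiZD 1 0 0; rewrite !scale1r addr0 => /(congr1 (fun x => x - phi 0)).
  by rewrite subrr addrK => <-.
elim=> [|N IH] c u; first by rewrite !big_ord0.
by rewrite !big_ord_recr /= addrC phiZD IH addrC.
Qed.

Lemma sum_mul_delta (K : pzSemiRingType) (F : nat -> K) (j k : nat) :
  \sum_(t < k) F t * (t == j :> nat)%:R = if (j < k)%N then F j else 0.
Proof.
elim: k => [|k IH]; first by rewrite big_ord0.
rewrite big_ord_recr /= IH; case: (ltngtP j k) => [ltjk | ltkj | ->].
- by rewrite ltnS ltnW //= mulr0n mulr0 addr0.
- by rewrite ltnNge ltkj /= mulr0n mulr0 addr0.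
- by rewrite ltnSn /= mulr1n mulr1 add0r.
Qed.

Lemma sum_indicator (K : pzSemiRingType) j N :
  \sum_(i < j.+1 + N) (j < i)%N%:R = N%:R :> K.
Proof.
rewrite big_split_ord /= big1 ?add0r => [|i _]; last by rewrite ltnNge -ltnS ltn_ord.
rewrite (eq_bigr (fun=> 1)) ?sumr_const ?card_ord // => i _.
by rewrite addSn ltnS leq_addr.
Qed.

Lemma nonconstant_step (T : eqType) (d : nat -> T) :
  (exists m n, d m != d n) -> exists j, d j != d j.+1.
Proof.
move=> [m [n neq_mn]]; apply: NNPP => no_step.
have const k : d k = d 0.
  elim: k => // k IH; rewrite -IH.
  by case: (eqVneq (d k.+1) (d k)) => // ne; case: no_step; exists k; rewrite eq_sym.
by move: neq_mn; rewrite (const m) (const n) eqxx.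
Qed.

Section Normsq.
Variable R : realType.
Local Notation C := R[i].

Lemma normsq_ge0 (z : C) : 0 <= normsq z.
Proof. by rewrite addr_ge0 // sqr_ge0. Qed.

Lemma normsq_eq0 (z : C) : (normsq z == 0) = (z == 0).
Proof.
case: z => x y; rewrite /normsq /= paddr_eq0 ?sqr_ge0 // !sqrf_eq0.
by apply/andP/eqP => [[/eqP -> /eqP ->] | [-> ->]].
Qed.

Lemma normsq0 : normsq (0 : C) = 0.
Proof. by apply/eqP; rewrite normsq_eq0. Qed.

Lemma normsq1 : normsq (1 : C) = 1.
Proof. by rewrite /normsq /= expr0n /= expr1n addr0. Qed.

Lemma normsq_natmul (z : C) N : normsq (N%:R * z) = N%:R ^+ 2 * normsq z.
Proof.
rewrite -(rmorph_nat (@real_complex R)).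
by case: z => x y; rewrite /normsq /=; ring.
Qed.

End Normsq.

Section SquareSummable.
Variable R : realType.
Local Notation C := R[i].

Lemma natmul_bounded_le0 (x M : R) : (forall N : nat, N%:R * x <= M) -> x <= 0.
Proof.
move=> bounded; rewrite leNgt; apply/negP => x_gt0.
have := archi_boundP (divr_ge0 (normr_ge0 M) (ltW x_gt0)).
rewrite ltr_pdivrMr // => /lt_le_trans/(_ (bounded _)).
by rewrite ltNge ler_norm.
Qed.

Lemma ell2_finite_support (x : nat -> C) n :
  (forall k, (n <= k)%N -> x k = 0) -> ell2 x.
Proof.
move=> x0; exists (\sum_(k < n) normsq (x k)) => m.
rewrite [leRHS](sum_ord_widen (F := fun k => normsq (x k)) (leq_maxr m n)).
  rewrite (big_ord_widen _ (fun k => normsq (x k)) (leq_maxl m n)) big_mkcond /=.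
  by apply: ler_sum => k _; case: ifP => // _; exact: normsq_ge0.
by move=> k /x0 ->; exact: normsq0.
Qed.

Lemma ell2_eventually_const (x : nat -> C) j c :
  ell2 x -> (forall k, (j < k)%N -> x k = c) -> c = 0.
Proof.
move=> [M bound] xc; apply/eqP; rewrite -normsq_eq0 eq_le normsq_ge0 andbT.
apply: (natmul_bounded_le0 (M := M)) => N; apply: le_trans (bound (j.+1 + N)%N).
have tail : N%:R * normsq c = \sum_(i < N) normsq (x (j.+1 + i)%N).
  rewrite (eq_bigr (fun=> normsq c)) => [|k _]; last by rewrite xc // addSn ltnS leq_addr.
  by rewrite sumr_const card_ord mulr_natl.
rewrite big_split_ord /= tail -[leLHS]add0r lerD // sumr_ge0 // => k _.
exact: normsq_ge0.
Qed.

End SquareSummable.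

Section GradedBasis.
Variable R : realType.
Local Notation C := R[i].
Variable B : nat -> {poly C}.
Hypothesis size_basis : forall n, size (B n) = n.+1.

Lemma size_sum_basis N (c : nat -> C) : (size (\sum_(k < N) c k *: B k)%R <= N)%N.
Proof.
elim: N => [|N IH]; first by rewrite big_ord0 size_poly0.
rewrite big_ord_recr /= (leq_trans (size_polyD _ _)) // geq_max (leq_trans IH) //.
by rewrite (leq_trans (size_scale_leq _ _)) // size_basis.
Qed.

Lemma lead_coef_basis_neq0 n : lead_coef (B n) != 0.
Proof. by rewrite lead_coef_eq0 -size_poly_eq0 size_basis. Qed.

Lemma sum_basis_eq0 N (c : nat -> C) : \sum_(k < N) c k *: B k = 0 ->
  forall k, (k < N)%N -> c k = 0.
Proof.
elim: N => [|N IH]; first by [].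
rewrite big_ord_recr /= => sum0.
have cN : c N = 0.
  have /leq_sizeP sizeN := size_sum_basis N c.
  move: (congr1 (coefp N) sum0); rewrite /= coefD coefZ coef0 sizeN // add0r.
  have lcN : (B N)`_N != 0 by have := lead_coef_basis_neq0 N; rewrite lead_coefE size_basis.
  by move/eqP; rewrite mulf_eq0 (negPf lcN) orbF => /eqP.
move: sum0; rewrite cN scale0r addr0 => /IH cN0 k.
by rewrite ltnS leq_eqVlt => /orP[/eqP -> // | /cN0].
Qed.

Lemma exists_sum_basis n (f : {poly C}) : (size f <= n)%N ->
  exists c, (forall k, (n <= k)%N -> c k = 0) /\ f = \sum_(k < n) c k *: B k.
Proof.
elim: n f => [|n IH] f size_f.
  exists (fun=> 0); split=> //; rewrite big_ord0.
  by apply/eqP; rewrite -size_poly_eq0 -leqn0.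
pose a := f`_n / lead_coef (B n).
have : (size (f - a *: B n)%R <= n)%N.
  apply/leq_sizeP => j; rewrite leq_eqVlt => /orP[/eqP <- | ltnj].
    have lcn : (B n)`_n = lead_coef (B n) by rewrite lead_coefE size_basis.
    by rewrite coefB coefZ lcn mulfVK ?lead_coef_basis_neq0 ?subrr.
  rewrite coefB coefZ !nth_default ?mulr0 ?subrr ?size_basis //.
  exact: leq_trans size_f ltnj.
move=> /IH [c [c0 fE]].
exists (fun k => if k == n then a else c k); split.
  by move=> k ltnk; rewrite gtn_eqF // c0 // ltnW.
rewrite big_ord_recr /= eqxx (eq_bigr (fun k : 'I_n => c k *: B k)).
  by rewrite -fE subrK.
by move=> [k ltkn] _ /=; rewrite ltn_eqF.
Qed.

Lemma coords_spec (f : {poly C}) : is_coords B f (coords B f).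
Proof.
apply: (epsilon_spec (inhabits (fun=> 0))).
by have [c] := exists_sum_basis (leqnn (size f)); exists c.
Qed.

Lemma coords_eq0 (f : {poly C}) k : (size f <= k)%N -> coords B f k = 0.
Proof. by case: (coords_spec f) => vanish _ /vanish. Qed.

Lemma sum_coords_widen (V : nmodType) (G : nat -> C -> V) (f : {poly C}) N :
  (forall k, G k 0 = 0) -> (size f <= N)%N ->
  \sum_(k < size f) G k (coords B f k) = \sum_(k < N) G k (coords B f k).
Proof.
move=> G0 size_f; apply: (sum_ord_widen (F := fun k => G k (coords B f k)) size_f).
by move=> k /coords_eq0 ->.
Qed.

Lemma coords_expansion (f : {poly C}) N : (size f <= N)%N ->
  f = \sum_(k < N) coords B f k *: B k.
Proof.
move=> size_f; have [_ {1}->] := coords_spec f.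
by apply: (sum_coords_widen (G := fun k x => x *: B k)) => // k; rewrite scale0r.
Qed.

Lemma coords_sum_basis N (c : nat -> C) : (forall k, (N <= k)%N -> c k = 0) ->
  coords B (\sum_(k < N) c k *: B k) = c.
Proof.
move=> c0; set f := \sum_(k < N) _; have size_f := size_sum_basis N c.
have diff0 : \sum_(k < N) (coords B f k - c k) *: B k = 0.
  by rewrite (eq_bigr _ (fun k _ => scalerBl _ _ _)) sumrB -coords_expansion ?subrr.
apply: functional_extensionality => k; case: (ltnP k N) => [ltkN | leNk].
  apply/eqP; rewrite -subr_eq0; apply/eqP.
  exact: (sum_basis_eq0 (c := fun k => coords B f k - c k) diff0 ltkN).
by rewrite c0 // coords_eq0 // (leq_trans size_f).
Qed.

Lemma coords_basis n : coords B (B n) = fun k => (k == n)%:R.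
Proof.
have -> : B n = \sum_(k < n.+1) (k == n :> nat)%:R *: B k.
  rewrite big_ord_recr /= eqxx scale1r big1 ?add0r // => k _.
  by rewrite ltn_eqF ?scale0r.
by apply: coords_sum_basis => k /gtn_eqF ->.
Qed.

Lemma coordsZD a (f g : {poly C}) :
  coords B (a *: f + g) = fun k => a * coords B f k + coords B g k.
Proof.
have size_fM := leq_maxl (size f) (size g); have size_gM := leq_maxr (size f) (size g).
have -> : a *: f + g =
    \sum_(k < maxn (size f) (size g)) (a * coords B f k + coords B g k) *: B k.
  rewrite {1}(coords_expansion size_fM) [X in _ + X](coords_expansion size_gM).
  rewrite scaler_sumr -big_split /=.
  by apply: eq_bigr => k _; rewrite scalerDl scalerA.
apply: coords_sum_basis => k leMk.
by rewrite !coords_eq0 ?mulr0 ?addr0 // (leq_trans _ leMk).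
Qed.

Lemma coords_sum N (c : nat -> C) (F : nat -> {poly C}) k :
  coords B (\sum_(i < N) c i *: F i) k = \sum_(i < N) c i * coords B (F i) k.
Proof.
by apply: (linear_sumZ (V := C) (phi := fun f => coords B f k)) => a f g; rewrite coordsZD.
Qed.

Lemma size_scaleD a (f g : {poly C}) :
  (size (a *: f + g)%R <= maxn (size f) (size g))%N.
Proof.
apply: leq_trans (size_polyD _ _) _.
by rewrite geq_max leq_maxr (leq_trans (size_scale_leq _ _)) ?leq_maxl.
Qed.

Section Operator.
Variable d : nat -> C.

Lemma Epd_widen (f : {poly C}) N : (size f <= N)%N ->
  Epd B d f = \sum_(k < N) (coords B f k * d k) *: B k.
Proof.
by apply: (sum_coords_widen (G := fun k x => (x * d k) *: B k)) => k; rewrite mul0r scale0r.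
Qed.

Lemma EpdZD a (f g : {poly C}) : Epd B d (a *: f + g) = a *: Epd B d f + Epd B d g.
Proof.
rewrite (Epd_widen (size_scaleD a f g)) coordsZD.
rewrite (Epd_widen (leq_maxl (size f) (size g))) (Epd_widen (leq_maxr (size f) (size g))).
rewrite scaler_sumr -big_split /=; apply: eq_bigr => k _.
by rewrite scalerA -scalerDl mulrDl mulrA.
Qed.

Lemma Epd_sum_basis N (c : nat -> C) : (forall k, (N <= k)%N -> c k = 0) ->
  Epd B d (\sum_(k < N) c k *: B k) = \sum_(k < N) (c k * d k) *: B k.
Proof. by move=> c0; rewrite (Epd_widen (size_sum_basis N c)) coords_sum_basis. Qed.

End Operator.

Lemma ipH_widen (f : {poly C}) g N : (size f <= N)%N ->
  ipH B f g = \sum_(k < N) coords B f k * (g k)^*.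
Proof. by apply: (sum_coords_widen (G := fun k x => x * (g k)^*)) => k; rewrite mul0r. Qed.

Lemma ipHZD a (f1 f2 : {poly C}) g :
  ipH B (a *: f1 + f2) g = a * ipH B f1 g + ipH B f2 g.
Proof.
rewrite (ipH_widen g (size_scaleD a f1 f2)) coordsZD.
rewrite (ipH_widen g (leq_maxl (size f1) (size f2))) (ipH_widen g (leq_maxr (size f1) (size f2))).
rewrite mulr_sumr -big_split /=; apply: eq_bigr => k _.
by rewrite mulrDl mulrA.
Qed.

Lemma ipH_sum_basis N (c : nat -> C) g : (forall k, (N <= k)%N -> c k = 0) ->
  ipH B (\sum_(k < N) c k *: B k) g = \sum_(k < N) c k * (g k)^*.
Proof. by move=> c0; rewrite (ipH_widen g (size_sum_basis N c)) coords_sum_basis. Qed.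

Lemma ipH_basis n g : ipH B (B n) g = (g n)^*.
Proof.
rewrite (ipH_widen g (eq_leq (size_basis n))) coords_basis big_ord_recr /= eqxx mul1r.
by rewrite big1 ?add0r // => k _; rewrite ltn_eqF ?mul0r.
Qed.

Lemma normH_sqr (f : {poly C}) N : (size f <= N)%N ->
  normH B f ^+ 2 = \sum_(k < N) normsq (coords B f k).
Proof.
move=> size_f; rewrite sqr_sqrtr ?sumr_ge0 // => [|k _]; last exact: normsq_ge0.
by apply: (sum_coords_widen (G := fun=> @normsq R)) size_f => k; rewrite normsq0.
Qed.

Lemma normsq_coords_le (f : {poly C}) k : normsq (coords B f k) <= normH B f ^+ 2.
Proof.
rewrite (normH_sqr (leq_maxl (size f) k.+1)).
rewrite (bigD1 (Ordinal (leq_maxr (size f) k.+1))) //= lerDl.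
by apply: sumr_ge0 => i _; exact: normsq_ge0.
Qed.

End GradedBasis.

Section SummationByParts.
Variables (K : pzRingType) (V : lmodType K).

(* Entry (i, m) of the matrix of E_{p,d} in the basis q, when p_0 = q_0 and
   p_(n+1) = q_(n+1) - q_n. *)
Definition Tmat (d : nat -> K) (i m : nat) : K :=
  if (i < m)%N then d i - d i.+1 else if i == m then d m else 0.

Lemma Tmat_lt (d : nat -> K) i m : (i < m)%N -> Tmat d i m = d i - d i.+1.
Proof. by rewrite /Tmat => ->. Qed.

Lemma Tmat_diag (d : nat -> K) m : Tmat d m m = d m.
Proof. by rewrite /Tmat ltnn eqxx. Qed.

Lemma Tmat_eq0 (d : nat -> K) i m : (m < i)%N -> Tmat d i m = 0.
Proof. by move=> ltmi; rewrite /Tmat ltnNge (ltnW ltmi) gtn_eqF. Qed.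

Lemma summation_by_parts (p q : nat -> V) (d : nat -> K) :
  p 0 = q 0 -> (forall n, p n.+1 = q n.+1 - q n) ->
  forall m, \sum_(n < m.+1) d n *: p n = \sum_(i < m.+1) Tmat d i m *: q i.
Proof.
move=> p0 pS; elim=> [|m IH]; first by rewrite !big_ord1 p0 Tmat_diag.
rewrite big_ord_recr /= IH pS !big_ord_recr /= Tmat_diag Tmat_lt // Tmat_diag.
rewrite [in RHS](eq_bigr (fun i : 'I_m => Tmat d i m *: q i)); last first.
  by move=> i _; have lt_im := ltn_ord i; rewrite !Tmat_lt // ltnW.
by rewrite scalerBr scalerBl -!addrA [- _ + _]addrC.
Qed.

End SummationByParts.

Section Laguerre.
Variable R : realType.
Local Notation C := R[i].

Definition laguerre_coef (b : R) n k : C :=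
  ((-1) ^+ k / (k`!)%:R) * gbinom (n%:R + b%:C%C) (n - k).

Lemma laguerre_poly (b : R) n : laguerre b n = \poly_(k < n.+1) laguerre_coef b n k.
Proof. by rewrite poly_def. Qed.

Lemma gbinom0 (x : C) : gbinom x 0 = 1.
Proof. by rewrite /gbinom big_ord0 fact0 invr1 mulr1. Qed.

Lemma gbinomS (x : C) m : gbinom (x + 1) m.+1 = gbinom x m.+1 + gbinom x m.
Proof.
rewrite /gbinom big_ord_recl big_ord_recr /= factS natrM subr0.
rewrite (eq_bigr (fun i : 'I_m => x - i%:R)); last first.
  by move=> i _; rewrite /bump /= add1n -addn1 natrD; ring.
have fact_neq0 : (m`!)%:R != 0 :> C by rewrite pnatr_eq0 -lt0n fact_gt0.
have mS_neq0 : (m.+1)%:R != 0 :> C by rewrite pnatr_eq0.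
by field; rewrite fact_neq0 addrC natr1.
Qed.

Lemma size_laguerre (b : R) n : size (laguerre b n) = n.+1.
Proof.
rewrite laguerre_poly size_poly_eq // /laguerre_coef subnn gbinom0 mulr1.
rewrite mulf_neq0 ?expf_neq0 ?oppr_eq0 ?oner_eq0 // invr_eq0 pnatr_eq0 -lt0n.
exact: fact_gt0.
Qed.

Lemma laguerre0_shift (b : R) : laguerre (b + 1) 0 = laguerre b 0.
Proof.
by rewrite !laguerre_poly; apply/polyP => k; rewrite !coef_poly /laguerre_coef !gbinom0.
Qed.

Lemma laguerreS_shift (b : R) n :
  laguerre (b + 1) n.+1 = laguerre (b + 1) n + laguerre b n.+1.
Proof.
apply/polyP => k; rewrite !laguerre_poly coefD !coef_poly.
case: (ltngtP k n.+1) => [ltkn | ltnk | ->].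
- have le_kn : (k <= n)%N by rewrite -ltnS.
  rewrite ltnS (ltnW ltkn) /laguerre_coef (subSn le_kn) -mulrDr; congr (_ * _).
  have shiftS : n%:R + (b + 1)%:C%C = (n.+1)%:R + b%:C%C :> C.
    by rewrite rmorphD rmorph1 -addn1 natrD /=; ring.
  have shiftSS : (n.+1)%:R + (b + 1)%:C%C = ((n.+1)%:R + b%:C%C) + 1 :> C.
    by rewrite rmorphD rmorph1 /=; ring.
  by rewrite shiftS shiftSS gbinomS addrC.
- by rewrite ltnNge ltnk add0r.
- by rewrite add0r /laguerre_coef !subnn !gbinom0.
Qed.
End Laguerre.

Section LaguerreOperator.
Variables (R : realType) (alpha : R) (d : nat -> R[i]).
Local Notation C := R[i].
Local Notation P := (pseq alpha).
Local Notation Q := (qseq alpha).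

Lemma size_pseq n : size (P n) = n.+1. Proof. exact: size_laguerre. Qed.
Lemma size_qseq n : size (Q n) = n.+1. Proof. exact: size_laguerre. Qed.

Lemma pseq0 : P 0 = Q 0. Proof. by rewrite /pseq /qseq laguerre0_shift. Qed.

Lemma pseqS n : P n.+1 = Q n.+1 - Q n.
Proof. by rewrite /pseq /qseq laguerreS_shift addrC addKr. Qed.

Lemma qseq_sum_pseq m : Q m = \sum_(n < m.+1) P n.
Proof.
elim: m => [|m IH]; first by rewrite big_ord1 pseq0.
by rewrite big_ord_recr /= -IH pseqS subrKC.
Qed.

Lemma Epd_qseq m : Epd P d (Q m) = \sum_(i < m.+1) Tmat d i m *: Q i.
Proof.
have -> : Q m = \sum_(n < m.+1) (n < m.+1)%N%:R *: P n.
  by rewrite qseq_sum_pseq; apply: eq_bigr => n _; rewrite ltn_ord scale1r.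
rewrite (Epd_sum_basis size_pseq d (c := fun n => (n < m.+1)%N%:R)) => [|n]; last first.
  by move=> le_mn; rewrite ltnNge le_mn.
rewrite -(summation_by_parts _ pseq0 pseqS).
by apply: eq_bigr => n _; rewrite ltn_ord mul1r.
Qed.

Lemma coords_Epd_qseq m : coords Q (Epd P d (Q m)) = fun i => Tmat d i m.
Proof.
by rewrite Epd_qseq (coords_sum_basis size_qseq (c := fun i => Tmat d i m)) // => i /Tmat_eq0.
Qed.

Lemma ipH_Epd_qseq g m : ipH Q (Epd P d (Q m)) g = (adjcoef d g m)^*.
Proof.
rewrite Epd_qseq (ipH_sum_basis size_qseq (c := fun i => Tmat d i m)) => [|i /Tmat_eq0 //].
rewrite big_ord_recr /= Tmat_diag /adjcoef rmorphD rmorphM rmorph_sum /= conjCK.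
rewrite addrC mulrC; congr (_ + _); apply: eq_bigr => i _.
by rewrite Tmat_lt // rmorphM rmorphB /= !conjCK.
Qed.

Lemma Epd_adjoint f g : ipH Q (Epd P d f) g = ipH Q f (adjcoef d g).
Proof.
rewrite {1}(coords_expansion size_qseq (leqnn (size f))).
rewrite (linear_sumZ (EpdZD size_pseq d)).
rewrite (linear_sumZ (V := C) (fun a u v => ipHZD size_qseq a u v g) _ (coords Q f)
  (fun k => Epd P d (Q k))).
by apply: eq_bigr => k _; rewrite ipH_Epd_qseq.
Qed.

Lemma Epd_adjoint_unique g h :
  (forall f, ipH Q (Epd P d f) g = ipH Q f h) -> h = adjcoef d g.
Proof.
move=> adj; apply: functional_extensionality => k.
by apply: (can_inj conjCK); rewrite -(ipH_basis size_qseq) -adj ipH_Epd_qseq.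
Qed.

Lemma in_dom_adj_Epd g : ell2 g ->
  (in_dom_adj Q (Epd P d) g <-> ell2 (adjcoef d g)).
Proof.
move=> g_ell2; split=> [[_ [h [h_ell2 adj]]] | adj_ell2].
  by rewrite -(Epd_adjoint_unique adj).
by split=> //; exists (adjcoef d g); split=> // f; exact: Epd_adjoint.
Qed.

Lemma adjcoef_delta j k : adjcoef d (fun i => (i == j)%:R) k = (Tmat d j k)^*.
Proof.
rewrite /adjcoef (sum_mul_delta (fun t => (d t)^* - (d t.+1)^*)).
case: (ltngtP j k) => [ltjk | ltkj | <-].
- by rewrite /= mulr0n mul0r add0r Tmat_lt // rmorphB.
- by rewrite /= mulr0n mul0r addr0 Tmat_eq0 // rmorph0.
- by rewrite /= mulr1n mul1r addr0 Tmat_diag.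
Qed.

Lemma basis_in_dom_adj j :
  in_dom_adj Q (Epd P d) (coords Q (Q j)) <-> (d j)^* - (d j.+1)^* = 0.
Proof.
have adj_tail k : (j < k)%N -> adjcoef d (fun i => (i == j)%:R) k = (d j)^* - (d j.+1)^*.
  by move=> ltjk; rewrite adjcoef_delta Tmat_lt // rmorphB.
have delta_ell2 : ell2 (fun i => (i == j)%:R :> C).
  by apply: (ell2_finite_support (n := j.+1)) => k /gtn_eqF ->.
rewrite (coords_basis size_qseq); apply: iff_trans (in_dom_adj_Epd delta_ell2) _.
split=> [adj_ell2 | step0]; first exact: ell2_eventually_const adj_ell2 adj_tail.
by apply: (ell2_finite_support (n := j.+1)) => k /adj_tail ->.
Qed.

Lemma unbounded_witness j N : exists f : {poly C},
  normH Q f ^+ 2 = N%:R /\ coords Q (Epd P d f) j = N%:R * (d j - d j.+1).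
Proof.
pose L := (j.+1 + N)%N; pose c i : C := ((j < i) && (i < L))%N%:R.
have c0 i : (L <= i)%N -> c i = 0 by rewrite /c leqNgt => /negbTE ->; rewrite andbF.
have c_ord (i : 'I_L) : c i = (j < i)%N%:R by rewrite /c ltn_ord andbT.
exists (\sum_(i < L) c i *: Q i); split.
  rewrite (normH_sqr size_qseq (size_sum_basis size_qseq L c)).
  rewrite (coords_sum_basis size_qseq c0) -(sum_indicator R j N).
  by apply: eq_bigr => i _; rewrite c_ord; case: (j < i)%N; [exact: normsq1 | exact: normsq0].
rewrite (linear_sumZ (EpdZD size_pseq d) L c).
rewrite (coords_sum size_qseq L c (fun i => Epd P d (Q i))).
rewrite -(sum_indicator C j N) mulr_suml.
apply: eq_bigr => i _; rewrite c_ord coords_Epd_qseq.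
by case: (ltnP j i) => [/Tmat_lt -> | _]; rewrite ?mul1r ?mul0r.
Qed.

Lemma Epd_unbounded : Dtilde d ->
  ~ exists M : R, forall f, normH Q (Epd P d f) <= M * normH Q f.
Proof.
move=> [_ /nonconstant_step [j neq_j]] [M bounded].
have eps_gt0 : 0 < normsq (d j - d j.+1).
  by rewrite lt_def normsq_eq0 subr_eq0 neq_j normsq_ge0.
suff : normsq (d j - d j.+1) <= 0 by rewrite leNgt eps_gt0.
apply: (natmul_bounded_le0 (M := M ^+ 2)) => N.
have [f [normf coordTf]] := unbounded_witness j N.
have quad : N%:R ^+ 2 * normsq (d j - d j.+1) <= M ^+ 2 * N%:R.
  rewrite -normsq_natmul -coordTf -normf -exprMn.
  apply: le_trans (normsq_coords_le size_qseq _ j) _.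
  by rewrite !expr2 ler_pM ?sqrtr_ge0.
move: quad; case: N {f normf coordTf} => [_ | N]; first by rewrite mul0r sqr_ge0.
by rewrite expr2 -mulrA [M ^+ 2 * _]mulrC ler_pM2l ?ltr0Sn.
Qed.

End LaguerreOperator.

Local Open Scope complex_scope.

Theorem theorem4 (R : realType) (alpha : R) (d : nat -> R[i]) :
  -1 < alpha -> Dtilde d ->
  let T := Epd (pseq alpha) d in
  let Q := qseq alpha in
  (* (i) *)
  (forall g, ell2 g -> (in_dom_adj Q T g <-> ell2 (adjcoef d g))) /\
  (* (ii) *)
  (forall g h, in_dom_adj Q T g -> is_adj_value Q T g h -> h = adjcoef d g) /\
  (* (iii) *)
  (forall j : nat,
     in_dom_adj Q T (coords Q (Q j)) <-> (d j)^* - (d j.+1)^* = 0) /\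
  (* (iv) *)
  (forall d' : nat -> R[i], Dtilde d' ->
     ~ exists M : R, forall f : {poly R[i]},
         normH Q (Epd (pseq alpha) d' f) <= M * normH Q f).
Proof.
(* H(q) is modelled by coordinate sequences in l_2, so [-1 < alpha], which makes
   the Laguerre weight integrable, plays no role. *)
move=> _ _ T Q; split; [|split; [|split]].
- exact: in_dom_adj_Epd.
- by move=> g h _ [_ adj]; exact: (Epd_adjoint_unique adj).
- exact: basis_in_dom_adj.
- exact: Epd_unbounded.
Qed.
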